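(* Let $E=(C,V)$ be an approval election. Then $\mathrm{cntr\text{-}agr}(E)=1$ if and only if $E$ is an identity election, and $\mathrm{cntr\text{-}agr}(E)=0$ if and only if either $\mathrm{cen}(E)$ contains a vote approving all candidates or $\mathrm{cen}(E)$ contains a vote disapproving all candidates.
   Context: An (approval) election is a pair $E=(C,V)$ with candidate set $C=\{c_1,\dots,c_m\}$ and a collection of voters $V=(v_1,\dots,v_n)$; each vote is a binary vector in $\{0,1\}^m$ ($v_i[j]=1$ iff voter $v_i$ approves $c_j$). $A(v)$ is the set of candidates approved by vote $v$ and $A(c)$ the set of voters approving candidate $c$. An identity election is one in which all votes are identical. The Hamming distance between votes is $\mathrm{ham}(u,v)=\sum_{j=1}^m|u[j]-v[j]|$. Let $\mathrm{avl}(E)=\frac{1}{|V|}\sum_{v\in V}|A(v)|$ and $\mathrm{rev\text{-}avl}(E)=\frac{1}{|V|}\sum_{v\in V}(|C|-|A(v)|)$ (the average number of disapproved candidates). A vote $u\in\{0,1\}^m$ is central for $E$ if for each candidate $c_j$, $u$ agrees regarding $c_j$ (i.e. $u[j]=v_i[j]$) with at least half of the voters; $\mathrm{cen}(E)$ denotes the set of all central votes. Central Agreement is $\mathrm{cntr\text{-}agr}(E)=1-\frac{\sum_{v_i\in V}\mathrm{ham}(v_i,u)}{|V|\cdot\min(\mathrm{avl}(E),\mathrm{rev\text{-}avl}(E))}$ for an arbitrary $u\in\mathrm{cen}(E)$ (the value does not depend on the choice of $u$). *)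

From mathcomp Require Import all_boot all_order all_algebra.
Set Implicit Arguments. Unset Strict Implicit. Unset Printing Implicit Defensive.
Import Order.TTheory GRing.Theory Num.Theory.
Local Open Scope ring_scope.

(* Candidates c_1..c_m are 'I_m, voters v_1..v_n are 'I_n.
   A vote is a binary vector 'I_m -> bool (true = approves). *)
Definition vote (m : nat) := 'I_m -> bool.
Definition election (m n : nat) := 'I_n -> vote m.

Section Defs.
Variables (m n : nat).

Definition appr_set (v : vote m) : {set 'I_m} := [set j | v j].
Definition approvers (E : election m n) (j : 'I_m) : {set 'I_n} :=
  [set i | E i j].

Definition ham (u v : vote m) : nat := #|[set j | u j != v j]|.

Definition identity_election (E : election m n) : Prop :=
  forall i i' : 'I_n, forall j : 'I_m, E i j = E i' j.

Variable R : realFieldType.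

Definition avl (E : election m n) : R :=
  (\sum_(i < n) #|appr_set (E i)|)%:R / n%:R.
Definition rev_avl (E : election m n) : R :=
  (\sum_(i < n) (m - #|appr_set (E i)|)%N)%:R / n%:R.

Definition central (E : election m n) (u : vote m) : Prop :=
  forall j : 'I_m, (n <= 2 * #|[set i | u j == E i j]|)%N.

Definition cntr_agr_wrt (E : election m n) (u : vote m) : R :=
  1 - (\sum_(i < n) ham (E i) u)%:R / (n%:R * Num.min (avl E) (rev_avl E)).

Definition majority_vote (E : election m n) : vote m :=
  fun j => (n <= 2 * #|approvers E j|)%N.

(* cntr-agr(E), evaluated at the (central) majority vote; the paper notes
   the value does not depend on the choice of central vote. *)
Definition cntr_agr (E : election m n) : R := cntr_agr_wrt E (majority_vote E).

End Defs.

From mathcomp Require Import all_boot all_order all_algebra.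
From mathcomp Require Import zify.
Set Implicit Arguments. Unset Strict Implicit. Unset Printing Implicit Defensive.
Import Order.TTheory GRing.Theory Num.Theory.
Local Open Scope ring_scope.

(** For a candidate j let a_j and c_j be its numbers of approvers and
  disapprovers, so that a_j + c_j = n. Double counting the approval matrix
  gives n avl(E) = sum_j a_j and n rev-avl(E) = sum_j c_j, and the majority
  vote disagrees with exactly min(a_j, c_j) voters on j, so
    cntr-agr(E) = 1 - sum_j min(a_j, c_j) / min(sum_j a_j, sum_j c_j).
  This is 1 iff every min(a_j, c_j) vanishes, i.e. every candidate is approved
  by all voters or by none. Always sum_j min(a_j, c_j) <= min(sum_j a_j,
  sum_j c_j), with equality iff a_j <= c_j for all j or c_j <= a_j for all j;
  these two conditions say exactly that the all-0, resp. all-1, vote is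
  central. *)

Lemma sum_card_rows_cols (n m : nat) (b : 'I_n -> 'I_m -> bool) :
  (\sum_(i < n) #|[set j | b i j]| = \sum_(j < m) #|[set i | b i j]|)%N.
Proof.
have cardE k (p : 'I_k -> bool) : #|[set x | p x]| = (\sum_(x < k) p x)%N.
  by rewrite -sum1dep_card big_mkcond; apply: eq_bigr => x _; case: (p x).
under eq_bigr do rewrite cardE.
by rewrite exchange_big; apply: eq_bigr => j _; rewrite cardE.
Qed.

Lemma sum_minn_eq_suml (I : finType) (f g : I -> nat) :
  (\sum_i minn (f i) (g i) = \sum_i f i)%N <-> (forall i, f i <= g i)%N.
Proof.
have eq_sums :=
  (@leqif_sum I predT _ _ _ (fun i _ => leqif_eq (geq_minl (f i) (g i)))).2.
rewrite (rwP eqP) eq_sums; split=> [/forall_inP eq_i i | le_fg].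
  by apply/minn_idPl/eqP/eq_i.
by apply/forall_inP => i _; apply/eqP/minn_idPl.
Qed.

Lemma sum_minn_eq_minn_sum (I : finType) (f g : I -> nat) :
  (\sum_i minn (f i) (g i) = minn (\sum_i f i) (\sum_i g i))%N <->
  (forall i, f i <= g i)%N \/ (forall i, g i <= f i)%N.
Proof.
have sum_minnC : (\sum_i minn (f i) (g i) = \sum_i minn (g i) (f i))%N.
  by apply: eq_bigr => i _; rewrite minnC.
split=> [|[le_fg | le_gf]].
- have [_ | _] := leqP (\sum_i f i)%N (\sum_i g i)%N.
    by rewrite sum_minn_eq_suml; left.
  by rewrite sum_minnC sum_minn_eq_suml; right.
- have /sum_minn_eq_suml -> := le_fg.
  by apply/esym/minn_idPl/leq_sum => i _.
- have /sum_minn_eq_suml := le_gf; rewrite -sum_minnC => ->.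
  by apply/esym/minn_idPr/leq_sum => i _.
Qed.

Lemma natr_minn (R : numDomainType) (a b : nat) :
  (minn a b)%:R = Num.min a%:R b%:R :> R.
Proof.
by case: leqP => [le_ab | /ltnW le_ba]; [rewrite min_l | rewrite min_r];
  rewrite ?ler_nat.
Qed.

Lemma subr_div_eq1 (F : fieldType) (x y : F) :
  y != 0 -> (1 - x / y == 1) = (x == 0).
Proof.
move=> y0; rewrite -[X in _ == X]subr0 (inj_eq (addrI 1)) eqr_opp.
by rewrite mulf_eq0 invr_eq0 (negbTE y0) orbF.
Qed.

Lemma subr_div_eq0 (F : fieldType) (x y : F) :
  y != 0 -> (1 - x / y == 0) = (x == y).
Proof.
by move=> y0; rewrite subr_eq0 eq_sym (can2_eq (divfK y0) (mulfK y0)) mul1r.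
Qed.

Section Election.
Variables (m n : nat) (E : election m n).

Definition napprovers (j : 'I_m) : nat := #|approvers E j|.
Definition ndisapprovers (j : 'I_m) : nat := #|[set i | ~~ E i j]|.

Lemma napprovers_add_ndisapprovers j : (napprovers j + ndisapprovers j = n)%N.
Proof.
rewrite -[RHS](card_ord n) -(cardsC (approvers E j)); congr (_ + _)%N.
by apply: eq_card => i; rewrite !inE.
Qed.

Lemma sum_card_appr_set :
  (\sum_(i < n) #|appr_set (E i)| = \sum_(j < m) napprovers j)%N.
Proof. exact: sum_card_rows_cols. Qed.

Lemma sum_card_disappr_set :
  (\sum_(i < n) (m - #|appr_set (E i)|) = \sum_(j < m) ndisapprovers j)%N.
Proof.
rewrite -sum_card_rows_cols; apply: eq_bigr => i _.
rewrite -[X in (X - _)%N](card_ord m) -(cardsC (appr_set (E i))) addKn.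
by apply: eq_card => j; rewrite !inE.
Qed.

Lemma sum_ham (u : vote m) : (\sum_(i < n) ham (E i) u =
  \sum_(j < m) if u j then ndisapprovers j else napprovers j)%N.
Proof.
rewrite /ham sum_card_rows_cols; apply: eq_bigr => j _.
by case: (u j); apply: eq_card => i; rewrite !inE; case: (E i j).
Qed.

Lemma sum_ham_majority_vote : (\sum_(i < n) ham (E i) (majority_vote E) =
  \sum_(j < m) minn (napprovers j) (ndisapprovers j))%N.
Proof.
rewrite sum_ham; apply: eq_bigr => j _; rewrite /majority_vote -/(napprovers j).
have := napprovers_add_ndisapprovers j; case: ifP; lia.
Qed.

Lemma centralE (u : vote m) : central E u <->
  forall j, if u j then (ndisapprovers j <= napprovers j)%N
            else (napprovers j <= ndisapprovers j)%N.
Proof.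
have agreeE j : #|[set i | u j == E i j]| =
    if u j then napprovers j else ndisapprovers j.
  by case: (u j); apply: eq_card => i; rewrite !inE; case: (E i j).
split=> central_u j; have := central_u j; rewrite ?agreeE;
  have := napprovers_add_ndisapprovers j; case: (u j); lia.
Qed.

Lemma identity_electionE : identity_election E <->
  forall j, minn (napprovers j) (ndisapprovers j) = 0%N.
Proof.
split=> [id_E j | const_E i i' j].
  have [i0 Ei0j | no_approver] := pickP (fun i => E i j).
    suff -> : ndisapprovers j = 0%N by rewrite minn0.
    apply/eqP; rewrite cards_eq0; apply/eqP/setP => i.
    by rewrite !inE -(id_E i0 i j) Ei0j.
  suff -> : napprovers j = 0%N by rewrite min0n.
  apply/eqP; rewrite cards_eq0; apply/eqP/setP => i.
  by rewrite !inE no_approver.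
have : napprovers j = 0%N \/ ndisapprovers j = 0%N by have := const_E j; lia.
case=> /eqP; rewrite cards_eq0 => /eqP/setP col; have := col i; have := col i';
  rewrite !inE; [by do 2!move=> /negbT/negbTE-> | by do 2!move=> /negbFE->].
Qed.

Variable R : realFieldType.
Hypothesis n_gt0 : (0 < n)%N.

Lemma mulr_avl : n%:R * avl R E = (\sum_(j < m) napprovers j)%:R.
Proof. by rewrite /avl sum_card_appr_set mulrC divfK // pnatr_eq0 -lt0n. Qed.

Lemma mulr_rev_avl : n%:R * rev_avl R E = (\sum_(j < m) ndisapprovers j)%:R.
Proof. by rewrite /rev_avl sum_card_disappr_set mulrC divfK // pnatr_eq0 -lt0n. Qed.

Lemma cntr_agrE : cntr_agr R E =
  1 - (\sum_(j < m) minn (napprovers j) (ndisapprovers j))%:R /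
      (minn (\sum_(j < m) napprovers j) (\sum_(j < m) ndisapprovers j))%:R.
Proof.
by rewrite /cntr_agr /cntr_agr_wrt sum_ham_majority_vote minr_pMr ?ler0n //
  mulr_avl mulr_rev_avl natr_minn.
Qed.

Lemma minn_sum_gt0 : 0 < Num.min (avl R E) (rev_avl R E) ->
  (0 < minn (\sum_(j < m) napprovers j) (\sum_(j < m) ndisapprovers j))%N.
Proof.
rewrite -(ltr0n R) natr_minn -mulr_avl -mulr_rev_avl -minr_pMr ?ler0n //.
by move=> min_gt0; rewrite mulr_gt0 ?ltr0n.
Qed.

End Election.

Theorem proposition2 (R : realFieldType) (m n : nat) (E : election m n)
  (hn : (0 < n)%N)
  (hden : 0 < Num.min (avl R E) (rev_avl R E)) :
  (cntr_agr R E = 1 <-> identity_election E) /\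
  (cntr_agr R E = 0 <->
     (central E (fun _ => true) \/ central E (fun _ => false))).
Proof.
have := minn_sum_gt0 hn hden; rewrite lt0n -(pnatr_eq0 R) => denom_neq0.
rewrite cntr_agrE //; split.
- rewrite (rwP eqP) subr_div_eq1 // pnatr_eq0 sum_nat_eq0 identity_electionE.
  by split=> [/forallP minn_eq0 j | minn_eq0]; [|apply/forallP => j];
    apply/eqP/minn_eq0.
- rewrite (rwP eqP) subr_div_eq0 // eqr_nat -(rwP eqP) sum_minn_eq_minn_sum.
  by rewrite !centralE /=; apply: or_comm.
Qed.
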